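(* For every directed forest $\mathcal{T}=(V,\mathsf{p})$ there exists a greatest element (with respect to the relation ''thinner than'') in the set of all leafless directed forests with vertex set $V$ that are thinner than $\mathcal{T}$.
   Context: A directed forest is a pair $\mathcal{T}=(V,\mathsf{p})$ where $V$ is a nonempty set and $\mathsf{p}\colon V\to V$ satisfies: if $n\in\mathbb{N}$, $v\in V$ and $\mathsf{p}^n(v)=v$, then $\mathsf{p}(v)=v$. A leaf is an element of $V\setminus\mathsf{p}(V)$; the forest is leafless if $\mathsf{p}(V)=V$. For directed forests $\mathcal{T}_1=(V,\mathsf{p}_1)$, $\mathcal{T}_2=(V,\mathsf{p}_2)$, $\mathcal{T}_1$ is thinner than $\mathcal{T}_2$ if $\mathsf{p}_1(v)\in\{v,\mathsf{p}_2(v)\}$ for every $v\in V$; this is a partial order. *)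

From Stdlib Require Import PeanoNat.

Definition directed_forest {V : Type} (p : V -> V) : Prop :=
  forall (n : nat) (v : V), 1 <= n -> Nat.iter n p v = v -> p v = v.

Definition leafless {V : Type} (p : V -> V) : Prop :=
  forall v : V, exists u : V, p u = v.

Definition thinner {V : Type} (p1 p2 : V -> V) : Prop :=
  forall v : V, p1 v = v \/ p1 v = p2 v.

(* Call v a core vertex if it lies in a set S of vertices each of which is the
   image under p of some other vertex of S; the core is closed under p.  The
   greatest leafless forest q moves each core vertex to its parent and fixes
   the others.  If r is leafless and thinner than p, the vertices moved by r
   form such a set S, so r moves only core vertices, and moves them as q does. *)

From Stdlib Require Import ClassicalEpsilon.

Section Core.
Variables (V : Type) (p : V -> V).

Definition properly_covered (S : V -> Prop) : Prop :=
  forall w, S w -> exists u, S u /\ p u = w /\ u <> w.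

Definition core (v : V) : Prop := exists S, properly_covered S /\ S v.

Lemma core_preimage v : core v -> exists u, core u /\ p u = v /\ u <> v.
Proof.
  intros [S [HS Sv]].
  destruct (HS v Sv) as [u [Su [pu uv]]].
  exists u; split; [exists S; split; assumption | split; assumption].
Qed.

Lemma core_parent v : core v -> core (p v).
Proof.
  intros [S [HS Sv]].
  destruct (excluded_middle_informative (p v = v)) as [fixed | moved].
  - rewrite fixed; exists S; split; assumption.
  - exists (fun w => S w \/ w = p v); split; [| right; reflexivity].
    intros w [Sw | ->].
    + destruct (HS w Sw) as [u [Su [pu uw]]].
      exists u; split; [left; exact Su | split; assumption].
    + exists v; split; [left; exact Sv |].
      split; [reflexivity |].
      intro e; apply moved; rewrite <- e; reflexivity.
Qed.

Lemma core_iter v n : core v -> core (Nat.iter n p v).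
Proof.
  intro Kv; induction n as [| n IH]; [exact Kv | exact (core_parent _ IH)].
Qed.

Definition core_step (v : V) : V :=
  if excluded_middle_informative (core v) then p v else v.

Lemma core_step_core v : core v -> core_step v = p v.
Proof.
  unfold core_step; intro Kv.
  destruct (excluded_middle_informative (core v)); [reflexivity | contradiction].
Qed.

Lemma core_step_not_core v : ~ core v -> core_step v = v.
Proof.
  unfold core_step; intro nKv.
  destruct (excluded_middle_informative (core v)); [contradiction | reflexivity].
Qed.

Lemma iter_core_step v n : core v -> Nat.iter n core_step v = Nat.iter n p v.
Proof.
  intro Kv; induction n as [| n IH]; [reflexivity |].
  simpl; rewrite IH; apply core_step_core, core_iter, Kv.
Qed.

Lemma thinner_core_step : thinner core_step p.
Proof.
  intro v; unfold core_step.
  destruct (excluded_middle_informative (core v)); [right | left]; reflexivity.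
Qed.

Lemma leafless_core_step : leafless core_step.
Proof.
  intro v; destruct (excluded_middle_informative (core v)) as [Kv | nKv].
  - destruct (core_preimage v Kv) as [u [Ku [pu _]]].
    exists u; rewrite core_step_core; assumption.
  - exists v; apply core_step_not_core, nKv.
Qed.

Lemma directed_forest_core_step : directed_forest p -> directed_forest core_step.
Proof.
  intros Hp n v n_pos cycle.
  destruct (excluded_middle_informative (core v)) as [Kv | nKv].
  - rewrite iter_core_step in cycle by exact Kv.
    rewrite core_step_core by exact Kv.
    exact (Hp n v n_pos cycle).
  - apply core_step_not_core, nKv.
Qed.

Lemma moved_core (r : V -> V) :
  leafless r -> thinner r p -> forall v, r v <> v -> core v.
Proof.
  intros Hl Ht v rv.
  exists (fun w => r w <> w); split; [| exact rv].
  intros w rw.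
  destruct (Hl w) as [u ru].
  assert (uw : u <> w) by (intro e; subst u; exact (rw ru)).
  exists u; split; [rewrite ru; intro e; exact (uw (eq_sym e)) |].
  split; [| exact uw].
  destruct (Ht u) as [fixed | parent].
  - exfalso; apply uw; rewrite <- ru, fixed; reflexivity.
  - rewrite <- parent; exact ru.
Qed.

Lemma thinner_core_step_max (r : V -> V) :
  leafless r -> thinner r p -> thinner r core_step.
Proof.
  intros Hl Ht v.
  destruct (excluded_middle_informative (r v = v)) as [fixed | moved];
    [left; exact fixed | right].
  rewrite core_step_core by exact (moved_core r Hl Ht v moved).
  destruct (Ht v) as [fixed | parent]; [contradiction | exact parent].
Qed.

End Core.

Theorem theorem4p3 (V : Type) (hV : inhabited V) (p : V -> V) :
  directed_forest p ->
  exists q : V -> V,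
    (directed_forest q /\ leafless q /\ thinner q p) /\
    (forall r : V -> V,
        directed_forest r -> leafless r -> thinner r p -> thinner r q).
Proof.
  intro Hp; exists (core_step V p); split.
  - split; [apply directed_forest_core_step, Hp |].
    split; [apply leafless_core_step | apply thinner_core_step].
  - intros r _; apply thinner_core_step_max.
Qed.
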